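(* For an integer $n\ge 1$, let $d_n$ be the smallest constant such that $$\sum_{k=1}^{n}\Big(\frac{1}{k}\sum_{j=1}^{k}a_j\Big)^2\leq d_n\sum_{k=1}^{n}a_k^2\qquad\text{for all }(a_1,\ldots,a_n)\in\mathbb{R}^n.$$ Then for every $n\ge 3$, $$4\Big(1-\frac{4}{\ln n+4}\Big)\le d_n\le 4\Big(1-\frac{8}{(\ln n+4)^2}\Big).$$ *)

From HB Require Import structures.
From mathcomp Require Import all_boot all_order all_algebra.
From mathcomp Require Import all_classical all_reals all_analysis.
Set Implicit Arguments. Unset Strict Implicit. Unset Printing Implicit Defensive.
Import Order.TTheory GRing.Theory Num.Theory.
Local Open Scope ring_scope.

(* a : 'I_n -> R encodes (a_1,...,a_n) with a_j = a (j-1).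
   hardy_lhs n a = sum_{k=1}^n ((1/k) sum_{j=1}^k a_j)^2 *)
Definition hardy_lhs (R : realType) (n : nat) (a : 'I_n -> R) : R :=
  \sum_(k < n) ((k.+1%:R)^-1 * \sum_(j < n | (j <= k)%N) a j) ^+ 2.

Definition hardy_rhs (R : realType) (n : nat) (a : 'I_n -> R) : R :=
  \sum_(k < n) (a k) ^+ 2.

Definition hardy_admissible (R : realType) (n : nat) (C : R) : Prop :=
  forall a : 'I_n -> R, hardy_lhs a <= C * hardy_rhs a.

Definition is_smallest_hardy_const (R : realType) (n : nat) (d : R) : Prop :=
  hardy_admissible n d /\ forall C : R, hardy_admissible n C -> d <= C.

From HB Require Import structures.
From mathcomp Require Import all_boot all_order all_algebra.
From mathcomp Require Import all_classical all_reals all_analysis.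
From mathcomp Require Import ring lra zify.
Import Order.TTheory GRing.Theory Num.Theory.
Set Implicit Arguments. Unset Strict Implicit. Unset Printing Implicit Defensive.
Local Open Scope ring_scope.

(* Writing A_k for the partial sums, the inequality
   (1 - t) x^2 + (1 - 1/t) y^2 <= (x - y)^2, applied to x = A_k, y = A_(k-1) and
   summed with an index shift, gives
     sum_k a_k^2 >= sum_k (2 - t_k - 1/t_(k+1)) A_k^2
   for all positive t_k (with t_1 = 0 and t_(n+1) = 1).  Take t_k = w_(k-1)/w_k
   for the approximate ground state w_k = prod_(j<=k) (2j-1)/(2j-2) * g(h_k):
   roughly sqrt k times the concave quadratic g(y) = y ((6W+1)/4 - y) evaluated
   at h_k = (W+1)/2 + H_(k-1), where W = ln n + 4 and H_m is the m-th harmonic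
   number.  Every coefficient is then at least W^2 / (4 (W^2 - 8) k^2).  The vector a_k = sqrt k - sqrt (k-1) has partial sums sqrt k, so
   its left-hand side is H_n, while sum a_k^2 <= 1 + H_n / 4.  Since H_n >= ln n
   and x |-> 4x/(x+4) is increasing, d_n >= 4 ln n / (ln n + 4). *)

Lemma sqrrB_ge_weighted (R : realFieldType) (x y t : R) : 0 < t ->
  (1 - t) * x ^+ 2 + (1 - t^-1) * y ^+ 2 <= (x - y) ^+ 2.
Proof.
move=> t_gt0.
have -> : (x - y) ^+ 2 = (1 - t) * x ^+ 2 + (1 - t^-1) * y ^+ 2 + (t * x - y) ^+ 2 / t.
  by field; rewrite gt_eqF.
by rewrite lerDl divr_ge0 ?sqr_ge0 ?ltW.
Qed.

Lemma sum_sqr_increments_ge (R : realFieldType) (n : nat) (A t : nat -> R) :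
  A 0%N = 0 -> t 1%N = 0 -> t n.+1 = 1 ->
  (forall k, (2 <= k <= n)%N -> 0 < t k) ->
  \sum_(1 <= k < n.+1) (2 - t k - (t k.+1)^-1) * A k ^+ 2
    <= \sum_(1 <= k < n.+1) (A k - A k.-1) ^+ 2.
Proof.
move=> A0 t1 tn t_gt0.
pose F k := (1 - (t k.+1)^-1) * A k ^+ 2.
have F0 : F 0%N = 0 by rewrite /F A0 expr0n mulr0.
have Fn : F n = 0 by rewrite /F tn invr1 subrr mul0r.
have shift : \sum_(1 <= k < n.+1) (1 - (t k)^-1) * A k.-1 ^+ 2
             = \sum_(1 <= k < n.+1) F k.
  rewrite big_add1 /=; transitivity (\sum_(0 <= k < n.+1) F k).
    by rewrite big_nat_recr //= Fn addr0.
  by rewrite [LHS]big_ltn // F0 add0r.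
apply: (@le_trans _ _ (\sum_(1 <= k < n.+1)
   ((1 - t k) * A k ^+ 2 + (1 - (t k)^-1) * A k.-1 ^+ 2))); last first.
  apply: ler_sum_nat => k /andP[k_ge1 k_le].
  have [->|k_neq1] := eqVneq k 1%N.
    by rewrite t1 A0 invr0 !subr0 mul1r expr0n /= mulr0 addr0.
  by apply: sqrrB_ge_weighted; apply: t_gt0; lia.
rewrite big_split /= shift -big_split /=; apply: ler_sum_nat => k _.
by rewrite /F -mulrDl ler_wpM2r ?sqr_ge0 //; lra.
Qed.

Section PartialSums.
Variables (R : realType) (n : nat).
Implicit Type a : 'I_n -> R.

Definition psum a (k : nat) : R := \sum_(i < n | (i < k)%N) a i.

Lemma psum0 a : psum a 0 = 0.
Proof. by apply: big_pred0 => i. Qed.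

Lemma psumS a (i : 'I_n) : psum a i.+1 = psum a i + a i.
Proof.
rewrite /psum (bigD1 i) ?ltnSn //= addrC; congr (_ + _).
by apply: eq_bigl => j; rewrite ltnS ltn_neqAle andbC.
Qed.

Lemma hardy_lhsE a : hardy_lhs a = \sum_(1 <= k < n.+1) (psum a k / k%:R) ^+ 2.
Proof.
by rewrite /hardy_lhs big_add1 /= big_mkord; apply: eq_bigr => k _; rewrite mulrC.
Qed.

Lemma hardy_rhsE a : hardy_rhs a = \sum_(1 <= k < n.+1) (psum a k - psum a k.-1) ^+ 2.
Proof.
rewrite /hardy_rhs big_add1 /= big_mkord; apply: eq_bigr => k _.
by rewrite psumS addrAC subrr add0r.
Qed.

Lemma psum_increments (F : nat -> R) k : F 0%N = 0 -> (k <= n)%N ->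
  psum (fun i : 'I_n => F i.+1 - F i) k = F k.
Proof.
move=> F0; elim: k => [|k IH] k_lt; first by rewrite psum0.
by rewrite (psumS _ (Ordinal k_lt)) IH ?(ltnW k_lt) // addrC subrK.
Qed.

End PartialSums.

Section Harmonic.
Variable R : realType.
Local Notation H := (series (@harmonic R)).

Lemma harmonic_series0 : H 0 = 0.
Proof. exact: big_geq. Qed.

Lemma harmonic_series_ge0 m : 0 <= H m.
Proof. by apply: sumr_ge0 => j _; exact: harmonic_ge0. Qed.

Lemma harmonic_series_le m m' : (m <= m')%N -> H m <= H m'.
Proof.
move=> /subnK <-; rewrite series_addn lerDl.
by apply: sumr_ge0 => j _; exact: harmonic_ge0.
Qed.

Lemma ln_succB_ge (x : R) : 0 < x -> (x + 1)^-1 <= ln (x + 1) - ln x.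
Proof.
move=> x_gt0.
have : ln (1 - (x + 1)^-1) <= - (x + 1)^-1.
  by apply: le_ln1Dx; rewrite ltrN2 invf_lt1; lra.
have -> : 1 - (x + 1)^-1 = x / (x + 1) by field; lra.
rewrite ln_div ?posrE; lra.
Qed.

Lemma ln_succB_le (x : R) : 0 < x -> ln (x + 1) - ln x <= x^-1.
Proof.
move=> x_gt0.
have xV_gt0 : 0 < x^-1 by rewrite invr_gt0.
have : ln (1 + x^-1) <= x^-1 by apply: le_ln1Dx; lra.
have -> : 1 + x^-1 = (x + 1) / x by field; lra.
rewrite ln_div ?posrE; lra.
Qed.

Lemma harmonic_series_le_ln m : (0 < m)%N -> H m <= 1 + ln m%:R.
Proof.
case: m => // m _; elim: m => [|m IH].
  by rewrite seriesSr harmonic_series0 ln1 /=; lra.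
have := @ln_succB_ge m.+1%:R (ltr0Sn R m).
rewrite seriesSr /= -[m.+2%:R]natr1; lra.
Qed.

Lemma ln_le_harmonic_series m : ln m.+1%:R <= H m.
Proof.
elim: m => [|m IH]; first by rewrite ln1 harmonic_series0.
have := @ln_succB_le m.+1%:R (ltr0Sn R m).
rewrite seriesSr /= -[m.+2%:R]natr1 => step.
by have := lerD IH step; rewrite addrCA subrr addr0.
Qed.

Lemma harmonic_series_le_linear m : H m <= (m%:R + 6) / 4.
Proof.
elim: m => [|m IH]; first by rewrite harmonic_series0; lra.
have [m_le2|m_gt2] := leqP m 2.
  by case: m m_le2 {IH} => [|[|[]]] // _; rewrite !seriesSr harmonic_series0 /=; lra.
have : harmonic m <= 4^-1 :> R by rewrite /= lef_pV2 ?posrE ?ler_nat.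
have := @natr1 R m; rewrite seriesSr; lra.
Qed.

Lemma expR1_le3 : expR 1 <= 3 :> R.
Proof.
have expR_sixth : expR (6^-1) <= 6 / 5 :> R.
  have : expR (6^-1) * expR (- 6^-1) = 1 :> R by rewrite -expRD subrr expR0.
  have := expR_ge1Dx (- 6^-1 : R); have := expR_gt0 (6^-1 : R); nra.
rewrite -[1](mulfV (_ : 6 != 0)) // expRM_natl.
apply: le_trans (lerXn2r 6 _ _ expR_sixth) _; rewrite ?nnegrE ?expR_ge0 //; lra.
Qed.

Lemma one_le_ln_nat n : (3 <= n)%N -> 1 <= ln n%:R :> R.
Proof.
move=> n_ge3; have n_gt0 : (0 < n)%N by lia.
rewrite -[X in X <= _]expRK ler_ln ?posrE ?expR_gt0 ?ltr0n //.
by apply: le_trans expR1_le3 _; rewrite ler_nat.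
Qed.

End Harmonic.

Section Coefficients.
Variables (R : realFieldType) (W : R).

Definition hardy_coef : R := 1 / 4 + 2 / (W ^+ 2 - 8).

Definition level (H : R) : R := (W + 1) / 2 + H.

Definition weight_factor (y : R) : R := y * ((6 * W + 1) / 4 - y).

Definition step_ratio (k y y' : R) : R :=
  (2 * k - 2) / (2 * k - 1) * weight_factor y / weight_factor y'.

Lemma hardy_coefK : 5 <= W -> 4 * (1 - 8 / W ^+ 2) * hardy_coef = 1.
Proof.
move=> W_ge5.
have W_gt0 : 0 < W by lra.
have W2_gt8 : 0 < W ^+ 2 - 8 by nra.
by rewrite /hardy_coef; field; rewrite !gt_eqF.
Qed.

Lemma hardy_coef_le : 5 <= W -> hardy_coef <= 25 / 68.
Proof.
move=> W_ge5.
have W2_ge : 17 <= W ^+ 2 - 8 by nra.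
have : (W ^+ 2 - 8)^-1 <= 17^-1 by rewrite lef_pV2 ?posrE //; lra.
rewrite /hardy_coef; lra.
Qed.

Lemma weight_factor_le y : weight_factor y <= ((6 * W + 1) / 8) ^+ 2.
Proof.
rewrite -subr_ge0.
have -> : ((6 * W + 1) / 8) ^+ 2 - weight_factor y = ((6 * W + 1) / 8 - y) ^+ 2.
  by rewrite /weight_factor; field.
exact: sqr_ge0.
Qed.

Lemma weight_factor_level_gt0 H : 5 <= W -> 0 <= H -> H <= W - 3 ->
  0 < weight_factor (level H).
Proof. by move=> W_ge5 H_ge0 H_le; rewrite /weight_factor /level; apply: mulr_gt0; lra. Qed.

Lemma step_ratio_coefE (k y : R) : 1 < k -> weight_factor y != 0 ->
  k ^+ 2 * (2 - step_ratio k (y - (k - 1)^-1) y - (step_ratio (k + 1) y (y + k^-1))^-1)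
  = k / (2 * (2 * k - 1))
    + (((6 * W + 1) / 4 - 2 * y) / (2 * (2 * k - 1))
       + 2 * k ^+ 2 / ((k - 1) * (2 * k - 1)) + (2 * k + 1) / (2 * k)) / weight_factor y.
Proof.
move=> k_gt1 G_neq0.
have k_neq0 : k != 0 by rewrite gt_eqF //; lra.
have k1_neq0 : k - 1 != 0 by rewrite gt_eqF //; lra.
rewrite /step_ratio.
have -> : weight_factor (y - (k - 1)^-1)
          = weight_factor y - ((6 * W + 1) / 4 - 2 * y) / (k - 1) - (k - 1)^-2.
  by rewrite /weight_factor; field.
have -> : weight_factor (y + k^-1)
          = weight_factor y + ((6 * W + 1) / 4 - 2 * y) / k - k^-2.
  by rewrite /weight_factor; field.
rewrite invf_div; field.
by rewrite G_neq0 k_neq0 k1_neq0 !gt_eqF //; lra.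
Qed.

Lemma first_coef_ge : 5 <= W -> hardy_coef <= 2 - (step_ratio 2 (level 0) (level 1))^-1.
Proof.
move=> W_ge5.
have W2_gt8 : 0 < W ^+ 2 - 8 by nra.
pose P := 4 * W ^+ 2 + 3 * W - 1; pose Q := (W + 3) * (4 * W - 5).
have P_gt0 : 0 < P by rewrite /P; nra.
have Q_gt0 : 0 < Q by rewrite /Q; nra.
have -> : (step_ratio 2 (level 0) (level 1))^-1 = 3 * Q / (2 * P).
  rewrite /step_ratio /weight_factor /level /P /Q; field.
  by rewrite !gt_eqF //; nra.
rewrite -subr_ge0.
have -> : 2 - 3 * Q / (2 * P) - hardy_coef
          = ((7 * P - 6 * Q) * (W ^+ 2 - 8) - 8 * P) / (4 * P * (W ^+ 2 - 8)).
  by rewrite /hardy_coef; field; rewrite !gt_eqF.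
apply: divr_ge0; last by rewrite !mulr_ge0 // ltW.
rewrite /P /Q; nra.
Qed.

Lemma interior_remainder_ge (k u : R) : 2 <= k -> - (2 * k + 3) / 4 <= u ->
  18 / 10 <= u / (2 * (2 * k - 1)) + 2 * k ^+ 2 / ((k - 1) * (2 * k - 1)) + (2 * k + 1) / (2 * k).
Proof.
move=> k_ge2 u_ge.
have k1_gt0 : 0 < (k - 1) * (2 * k - 1) by nra.
have : 1 <= (2 * k + 1) / (2 * k) by rewrite ler_pdivlMr; lra.
have : - (2 * k + 3) / (8 * (2 * k - 1)) <= u / (2 * (2 * k - 1)).
  have -> : - (2 * k + 3) / (8 * (2 * k - 1)) = (- (2 * k + 3) / 4) / (2 * (2 * k - 1)).
    by field; rewrite gt_eqF //; lra.
  by rewrite ler_pM2r // invr_gt0; lra.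
have : 7 / 8 <= 2 * k ^+ 2 / ((k - 1) * (2 * k - 1)) - (2 * k + 3) / (8 * (2 * k - 1)).
  have -> : 2 * k ^+ 2 / ((k - 1) * (2 * k - 1)) - (2 * k + 3) / (8 * (2 * k - 1))
            = (14 * k ^+ 2 - k + 3) / (8 * ((k - 1) * (2 * k - 1))).
    by field; rewrite !gt_eqF //; lra.
  by rewrite ler_pdivlMr; nra.
rewrite mulNr; lra.
Qed.

Lemma interior_coef_ge (k H : R) : 5 <= W -> 2 <= k ->
  0 <= H -> H <= (k + 5) / 4 -> H <= W - 3 ->
  hardy_coef / k ^+ 2 <= 2 - step_ratio k (level H - (k - 1)^-1) (level H)
                          - (step_ratio (k + 1) (level H) (level H + k^-1))^-1.
Proof.
move=> W_ge5 k_ge2 H_ge0 H_lin H_le.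
have G_gt0 := weight_factor_level_gt0 W_ge5 H_ge0 H_le.
have Ginv_gt0 : 0 < (weight_factor (level H))^-1 by rewrite invr_gt0.
have W2_gt8 : 0 < W ^+ 2 - 8 by nra.
rewrite ler_pdivrMr ?exprn_gt0 1?mulrC ?step_ratio_coefE ?gt_eqF //; try lra.
have : 1 / 4 <= k / (2 * (2 * k - 1)) by rewrite ler_pdivlMr; lra.
have : 2 / (W ^+ 2 - 8) <= 18 / 10 / weight_factor (level H).
  have := weight_factor_le (level H).
  have : 2 * ((6 * W + 1) / 8) ^+ 2 <= 18 / 10 * (W ^+ 2 - 8) by nra.
  move=> WB GV; rewrite ler_pdivrMr // mulrAC ler_pdivlMr //; lra.
have u_ge : - (2 * k + 3) / 4 <= (6 * W + 1) / 4 - 2 * level H by rewrite /level; lra.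
have := ler_wpM2r (ltW Ginv_gt0) (interior_remainder_ge k_ge2 u_ge).
rewrite /hardy_coef; lra.
Qed.

Lemma last_coef_ge (k H : R) : 5 <= W -> 3 <= k -> 0 <= H -> H <= W - 3 ->
  hardy_coef / k ^+ 2 <= 1 - step_ratio k (level H - (k - 1)^-1) (level H).
Proof.
move=> W_ge5 k_ge3 H_ge0 H_le.
have h_ge3 : 3 <= level H by rewrite /level; lra.
have s_ge : 11 / 4 <= (6 * W + 1) / 4 - level H by rewrite /level; lra.
have d_gt0 : 0 < (k - 1)^-1 by rewrite invr_gt0; lra.
have -> : 1 - step_ratio k (level H - (k - 1)^-1) (level H)
          = (1 + 2 * ((6 * W + 1) / 4 - 2 * level H + (k - 1)^-1)
                 / (level H * ((6 * W + 1) / 4 - level H))) / (2 * k - 1).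
  by rewrite /step_ratio /weight_factor; field; rewrite !gt_eqF //; nra.
apply: (@le_trans _ _ (1 / 4 / (2 * k - 1))).
  have := hardy_coef_le W_ge5.
  rewrite ler_pdivrMr ?exprn_gt0 1?mulrAC ?ler_pdivlMr; try lra; nra.
rewrite ler_pM2r ?invr_gt0; last lra.
have hs_gt0 : 0 < level H * ((6 * W + 1) / 4 - level H) by nra.
have shift (x y : R) : y != 0 -> 1 + 2 * x / y - 1 / 4 = (3 / 4 * y + 2 * x) / y.
  by move=> y_neq0; field.
rewrite -subr_ge0 shift ?gt_eqF //; apply: divr_ge0; nra.
Qed.

End Coefficients.

Section UpperBound.
Variables (R : realType) (W : R) (n : nat).
Hypotheses (W_ge5 : 5 <= W) (n_ge3 : (3 <= n)%N)
           (harmonic_le : series (@harmonic R) n.-1 <= W - 3).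
Local Notation H := (series (@harmonic R)).

Definition height (k : nat) : R := level W (H k.-1).

Definition ratio (k : nat) : R :=
  if k == 1%N then 0 else if k == n.+1 then 1
  else step_ratio W k%:R (height k.-1) (height k).

Lemma harmonic_range k : (k <= n)%N -> 0 <= H k.-1 <= W - 3.
Proof.
move=> k_le; rewrite harmonic_series_ge0 /=.
by apply: le_trans harmonic_le; apply: harmonic_series_le; lia.
Qed.

Lemma height_pred k : (2 <= k)%N -> height k.-1 = level W (H k.-1) - (k%:R - 1)^-1.
Proof.
case: k => [|[|k]] // _; rewrite /height /level /= seriesSr /= -[k.+2%:R]natr1.
by rewrite addrK addrA addrK.
Qed.

Lemma height_succ k : (1 <= k)%N -> height k.+1 = level W (H k.-1) + k%:R^-1.
Proof. by case: k => // k _; rewrite /height /level /= seriesSr addrA. Qed.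

Lemma weight_factor_height_gt0 j : (j <= n)%N -> 0 < weight_factor W (height j).
Proof. by move=> /harmonic_range /andP[]; exact: weight_factor_level_gt0. Qed.

Lemma ratio1 : ratio 1 = 0.
Proof. by rewrite /ratio eqxx. Qed.

Lemma ratioSn : ratio n.+1 = 1.
Proof. by rewrite /ratio ifN_eq ?eqxx //; lia. Qed.

Lemma ratio_mid k : (2 <= k <= n)%N ->
  ratio k = step_ratio W k%:R (level W (H k.-1) - (k%:R - 1)^-1) (level W (H k.-1)).
Proof. by move=> /andP[k_ge2 k_le]; rewrite /ratio !ifN_eq ?height_pred //; lia. Qed.

Lemma ratio2 : ratio 2 = step_ratio W 2 (level W 0) (level W 1).
Proof.
rewrite /ratio !ifN_eq //; last lia.
by rewrite /height /= seriesSr !harmonic_series0 add0r /= invr1.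
Qed.

Lemma ratio_gt0 k : (2 <= k <= n)%N -> 0 < ratio k.
Proof.
move=> /andP[k_ge2 k_le].
rewrite /ratio !ifN_eq; try lia.
have k_gt1 : (1 : R) < k%:R by rewrite ltr1n.
have k1_le : (k.-1 <= n)%N by lia.
rewrite /step_ratio mulr_gt0 ?invr_gt0 ?weight_factor_height_gt0 //.
by rewrite mulr_gt0 ?weight_factor_height_gt0 // divr_gt0 //; lra.
Qed.

Lemma ratio_coef_ge k : (1 <= k <= n)%N ->
  hardy_coef W / k%:R ^+ 2 <= 2 - ratio k - (ratio k.+1)^-1.
Proof.
move=> /andP[k_ge1 k_le].
have [->|k_neq1] := eqVneq k 1%N.
  by rewrite ratio2 ratio1 expr1n divr1 subr0; exact: first_coef_ge.
have k_ge2 : (2 <= k)%N by lia.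
have k_ge2R : (2 : R) <= k%:R by rewrite ler_nat.
have /andP[H_ge0 H_le] := harmonic_range k_le.
rewrite ratio_mid; last lia.
have [k_eqn|k_ltn] := eqVneq k n.
  have k_ge3 : (3 : R) <= k%:R by rewrite ler_nat k_eqn.
  have := last_coef_ge W_ge5 k_ge3 H_ge0 H_le.
  by rewrite k_eqn ratioSn invr1 -k_eqn; lra.
have ratioS : ratio k.+1
    = step_ratio W (k%:R + 1) (level W (H k.-1)) (level W (H k.-1) + k%:R^-1).
  by rewrite /ratio !ifN_eq -?natr1 ?height_succ //; lia.
have H_lin : H k.-1 <= (k%:R + 5) / 4.
  have : k%:R = k.-1%:R + 1 :> R by rewrite natr1 prednK.
  have := harmonic_series_le_linear R k.-1; lra.
rewrite ratioS; exact: interior_coef_ge.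
Qed.

Lemma hardy_seq_upper (A : nat -> R) : A 0%N = 0 ->
  \sum_(1 <= k < n.+1) (A k / k%:R) ^+ 2
    <= 4 * (1 - 8 / W ^+ 2) * \sum_(1 <= k < n.+1) (A k - A k.-1) ^+ 2.
Proof.
move=> A0.
have D_ge0 : 0 <= 4 * (1 - 8 / W ^+ 2).
  have W2_ge : 25 <= W ^+ 2 by move: W_ge5; nra.
  have : 8 / W ^+ 2 <= 1 by rewrite ler_pdivrMr; lra.
  lra.
rewrite -[X in X <= _]mul1r -[X in X * _ <= _](hardy_coefK W_ge5) -(mulrA _ (hardy_coef W)).
apply: ler_wpM2l; first exact: D_ge0.
apply: le_trans (sum_sqr_increments_ge A0 ratio1 ratioSn ratio_gt0).
rewrite mulr_sumr; apply: ler_sum_nat => k k_range.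
rewrite expr_div_n mulrA mulrAC.
by apply: ler_wpM2r; [exact: sqr_ge0 | exact: ratio_coef_ge].
Qed.

End UpperBound.

Lemma hardy_admissible_ln (R : realType) (n : nat) : (3 <= n)%N ->
  hardy_admissible n (4 * (1 - 8 / (ln (n%:R : R) + 4) ^+ 2)).
Proof.
move=> n_ge3 a.
have W_ge5 : 5 <= ln (n%:R : R) + 4 by have := one_le_ln_nat R n_ge3; lra.
have harmonic_le : series (@harmonic R) n.-1 <= ln (n%:R : R) + 4 - 3.
  have n1_gt0 : (0 < n.-1)%N by lia.
  have : ln (n.-1%:R : R) <= ln n%:R by rewrite ler_ln ?posrE ?ltr0n ?ler_nat; lia.
  have := harmonic_series_le_ln R n1_gt0; lra.
rewrite hardy_lhsE hardy_rhsE.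
exact: hardy_seq_upper W_ge5 n_ge3 harmonic_le _ (psum0 a).
Qed.

Definition sqrt_increments {R : realType} (n : nat) : 'I_n -> R :=
  fun i => Num.sqrt i.+1%:R - Num.sqrt i%:R.
Arguments sqrt_increments {R} n.

Section SqrtIncrements.
Variable R : realType.
Local Notation H := (series (@harmonic R)).

Lemma sqrtrD1B_sqr_le (x : R) : 0 <= x ->
  (Num.sqrt (x + 1) - Num.sqrt x) ^+ 2 <= (4 * x + 1)^-1.
Proof.
move=> x_ge0.
set p := Num.sqrt (x + 1); set q := Num.sqrt x.
have p2 : p ^+ 2 = x + 1 by rewrite sqr_sqrtr //; lra.
have q2 : q ^+ 2 = x by rewrite sqr_sqrtr.
have q_ge0 : 0 <= q by apply: sqrtr_ge0.
have q_le_p : q <= p by apply: ler_wsqrtr; lra.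
have pq_gt0 : 0 < (p + q) ^+ 2 by nra.
have pq_ge : 4 * x + 1 <= (p + q) ^+ 2 by nra.
have : (p - q) ^+ 2 * (p + q) ^+ 2 = 1.
  by rewrite -exprMn -subr_sqr p2 q2 addrAC subrr add0r expr1n.
move=> /(congr1 (fun y => y / (p + q) ^+ 2)); rewrite mulfK ?gt_eqF // div1r => ->.
by rewrite lef_pV2 ?posrE //; lra.
Qed.

Lemma sum_sqrt_increments_le m :
  \sum_(k < m.+1) (Num.sqrt k.+1%:R - Num.sqrt k%:R) ^+ 2 <= 1 + H m / 4 :> R.
Proof.
elim: m => [|m IH].
  by rewrite big_ord1 /= sqrtr1 sqrtr0 subr0 expr1n harmonic_series0; lra.
rewrite big_ord_recr /= seriesSr.
have := sqrtrD1B_sqr_le (ler0n R m.+1); rewrite natr1.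
have : 4 * (4 * m.+1%:R + 1)^-1 <= harmonic m :> R.
  have x_gt0 : (0 : R) < m.+1%:R by rewrite ltr0n.
  have -> : 4 * (4 * m.+1%:R + 1)^-1 = (m.+1%:R + 4^-1 : R)^-1.
    by field; rewrite !gt_eqF //; lra.
  by rewrite /= lef_pV2 ?posrE; lra.
lra.
Qed.

Lemma hardy_lhs_sqrt_increments n : hardy_lhs (sqrt_increments n) = H n.
Proof.
rewrite hardy_lhsE big_add1 /series /=; apply: eq_big_nat => k /andP[_ k_lt].
rewrite (psum_increments (F := fun k => Num.sqrt k%:R)) ?sqrtr0 //.
rewrite expr_div_n sqr_sqrtr ?ler0n // expr2 invfM mulrA mulfV ?mul1r // pnatr_eq0.
Qed.

Lemma hardy_rhs_sqrt_increments_gt0 n : (0 < n)%N -> 0 < hardy_rhs (@sqrt_increments R n).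
Proof.
case: n => // n _.
rewrite /hardy_rhs big_ord_recl /sqrt_increments /= sqrtr1 sqrtr0 subr0 expr1n.
by rewrite ltr_pwDl ?sumr_ge0 // => i _; exact: sqr_ge0.
Qed.

Lemma hardy_rhs_sqrt_increments_le n : hardy_rhs (sqrt_increments n) <= 1 + H n / 4.
Proof.
case: n => [|n]; first by rewrite /hardy_rhs big_ord0 harmonic_series0; lra.
apply: le_trans (sum_sqrt_increments_le n) _.
by have := harmonic_series_le R (leqnSn n); lra.
Qed.

End SqrtIncrements.

Lemma hardy_rhs_ge0 (R : realType) (n : nat) (a : 'I_n -> R) : 0 <= hardy_rhs a.
Proof. by apply: sumr_ge0 => i _; exact: sqr_ge0. Qed.

Lemma smallest_hardy_const_exists (R : realType) (n : nat) (D : R) (a0 : 'I_n -> R) :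
  hardy_admissible n D -> 0 < hardy_rhs a0 -> exists d : R, is_smallest_hardy_const n d.
Proof.
move=> D_adm a0_pos.
pose S : set R :=
  [set hardy_lhs a / hardy_rhs a | a in [set a : 'I_n -> R | 0 < hardy_rhs a]]%classic.
have S_ub : ubound S D by move=> _ [a a_pos <-]; rewrite ler_pdivrMr //; exact: D_adm.
have S_a0 : S (hardy_lhs a0 / hardy_rhs a0) by exists a0.
have S_sup : has_sup S by split; [exists (hardy_lhs a0 / hardy_rhs a0) | exists D].
exists (sup S); split => [a|C C_adm].
  have [rhs_pos|] := ltrP 0 (hardy_rhs a).
    by rewrite -ler_pdivrMr //; apply: sup_upper_bound => //; exists a.
  rewrite le_eqVlt ltNge hardy_rhs_ge0 orbF => /eqP rhs0.
  by have := D_adm a; rewrite rhs0 !mulr0.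
apply: ge_sup => [|_ [a a_pos <-]]; first by exists (hardy_lhs a0 / hardy_rhs a0).
by rewrite ler_pdivrMr //; exact: C_adm.
Qed.

Lemma lower_bound_of_ratio (R : realFieldType) (L h r d : R) :
  0 <= L <= h -> 0 < r -> r <= 1 + h / 4 -> h <= d * r -> 4 * (1 - 4 / (L + 4)) <= d.
Proof.
move=> /andP[L_ge0 L_le_h] r_gt0 r_le h_le.
have d_ge0 : 0 <= d by nra.
have h_le_d : 4 * h <= d * (4 + h) by nra.
have -> : 4 * (1 - 4 / (L + 4)) = 4 * L / (L + 4) by field; rewrite gt_eqF //; lra.
rewrite ler_pdivrMr; last lra.
have [d_le4|d_gt4] := lerP d 4; nra.
Qed.

Theorem theorem1p1 (R : realType) (n : nat) (hn : (3 <= n)%N) :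
  exists d : R, is_smallest_hardy_const n d /\
    4 * (1 - 4 / (ln (n%:R : R) + 4)) <= d /\
    d <= 4 * (1 - 8 / (ln (n%:R : R) + 4) ^+ 2).
Proof.
have adm := hardy_admissible_ln (R := R) hn.
have rhs_pos := hardy_rhs_sqrt_increments_gt0 R (ltnW (ltnW hn)).
have [d [d_adm d_min]] := smallest_hardy_const_exists adm rhs_pos.
exists d; split; first by []; split; last exact: d_min _ adm.
apply: lower_bound_of_ratio rhs_pos (hardy_rhs_sqrt_increments_le R n) _.
  rewrite ln_ge0 ?ler1n ?(ltnW (ltnW hn)) //=.
  apply: le_trans (ln_le_harmonic_series R n).
  by rewrite ler_ln ?posrE ?ltr0n ?ler_nat //; lia.
by rewrite -hardy_lhs_sqrt_increments; exact: d_adm.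
Qed.
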